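(* Let $n\in\mathbb{N}$. Then the number $N_n$ of distinct $n\times n$ principal reversible squares equals $1$ if and only if $n$ is prime.
   Context: A reversible square matrix is a real matrix $M=(M_{i,j})$ with indices $i,j\in\mathbb{Z}_n=\mathbb{Z}/n\mathbb{Z}$ (top-left entry index $(1,1)$, indices computed modulo $n$) such that (R) $M_{i,j}+M_{i,n+1-j}=M_{i,k}+M_{i,n+1-k}$ and $M_{i,j}+M_{n+1-i,j}=M_{k,j}+M_{n+1-k,j}$ for all $i,j,k$, and (V) $M_{i,j}+M_{k,l}=M_{i,l}+M_{k,j}$ for all $i,j,k,l$. An $n\times n$ principal reversible square is a reversible square matrix whose set of entries is exactly $\{1,\dots,n^2\}$, whose entries increase along each row and each column, and with $M_{1,1}=1$, $M_{1,2}=2$. *)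

From mathcomp Require Import all_boot all_order all_algebra.
From mathcomp Require Import boolp.
Set Implicit Arguments. Unset Strict Implicit. Unset Printing Implicit Defensive.

(* Indices: the paper's 1-based index i in Z_n is the 0-based i - 1 : 'I_n.
   The paper's reflection n+1-j (1-based) is rev_ord j (value n-1-j, 0-based). *)

Definition rev_rows_cols (n : nat) (M : 'M[nat]_n) : Prop :=
  (forall i j k : 'I_n, M i j + M i (rev_ord j) = M i k + M i (rev_ord k)) /\
  (forall i j k : 'I_n, M i j + M (rev_ord i) j = M k j + M (rev_ord k) j).

Definition vertex_cond (n : nat) (M : 'M[nat]_n) : Prop :=
  forall i j k l : 'I_n, M i j + M k l = M i l + M k j.

Definition reversible_square (n : nat) (M : 'M[nat]_n) : Prop :=
  rev_rows_cols M /\ vertex_cond M.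

Definition principal_reversible_square (n : nat) (M : 'M[nat]_n) : Prop :=
  [/\ reversible_square M,
      (forall v : nat, (exists i j : 'I_n, M i j = v) <-> (1 <= v <= n * n)),
      (forall (i j k : 'I_n), j < k -> M i j < M i k),
      (forall (i j k : 'I_n), i < j -> M i k < M j k) &
      (* M_{1,1} = 1 and M_{1,2} = 2, with column index 2 taken modulo n *)
      (exists o t : 'I_n, [/\ val o = 0, val t = 1 %% n, M o o = 1 & M o t = 2])].

(* N_n : every principal square has entries in {1..n^2}, so principal squares
   correspond bijectively to the matrices over 'I_(n*n).+1 whose
   nat-valued image is principal. *)
Definition N_count (n : nat) : nat :=
  #|[pred M : 'M['I_(n * n).+1]_n |
      `[< principal_reversible_square (map_mx (fun x : 'I_(n * n).+1 => nat_of_ord x) M) >]]|.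

From mathcomp Require Import all_boot all_order all_algebra zify.
From mathcomp Require Import boolp.
Set Implicit Arguments. Unset Strict Implicit. Unset Printing Implicit Defensive.

(* By (V) with M 0 0 = 1, a principal square is M i j = a_i + b_j + 1, where
   a and b are the first column and row shifted down by 1; since the entries
   are exactly 1..n^2, the sets A = {a_i} and B = {b_j} satisfy A (+) B = [0, n^2).
   If k is the least positive element of A, then [0, k) is contained in B,
   A consists of multiples of k, and B is a union of whole blocks
   [qk, qk + k); hence k divides |B| = n.  For n prime, k = 1 is excluded by
   b_1 = 1, so k = n, which forces B = [0, n) and A = {0, n, ..., n(n-1)}.
   Conversely, for every factorization n = q p with p > 1 the square whose
   entries minus 1 have mixed-radix digits (j mod p, i, j div p) is principal,
   and for composite n two values of p give two different squares. *)

Lemma mul_divn_dvdn_add k x s : k %| x -> s < k -> (x + s) %/ k * k = x.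
Proof.
move=> /dvdnP[c ->] sk; have k_gt0 : 0 < k by lia.
by rewrite divnMDl // divn_small // addn0.
Qed.

Lemma sorted_ltn_eq_subset (s t : seq nat) :
  sorted ltn s -> sorted ltn t -> {subset s <= t} -> size t <= size s -> s = t.
Proof.
move=> s_sorted t_sorted st ts; apply: (irr_sorted_eq (@ltn_trans) ltnn) => //.
exact: (uniq_min_size (sorted_uniq (@ltn_trans) ltnn s_sorted) st ts).2.
Qed.

Lemma sorted_enum_ord n : sorted (fun i j : 'I_n => i < j) (enum 'I_n).
Proof. by have := iota_ltn_sorted 0 n; rewrite -val_enum_ord sorted_map. Qed.

Lemma codom_injective (T : finType) (f : T -> nat) m :
  {subset iota m #|T| <= codom f} -> injective f.
Proof.
move=> sub; apply/injectiveP; apply: leq_size_uniq (iota_uniq m #|T|) sub _.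
by rewrite size_codom size_iota.
Qed.

Section SumDecomposition.

Variables (sa sb : seq nat) (N k : nat).
Hypotheses
  (sum_inj : forall x x' y y', x \in sa -> x' \in sa -> y \in sb -> y' \in sb ->
     x + y = x' + y' -> x = x')
  (sum_cover : forall z, z < N -> exists x y, [/\ x \in sa, y \in sb & z = x + y])
  (sum_lt : forall x y, x \in sa -> y \in sb -> x + y < N)
  (sa0 : 0 \in sa) (sb0 : 0 \in sb)
  (sak : k \in sa) (k_gt0 : 0 < k) (k_min : forall x, x \in sa -> 0 < x -> k <= x).

Lemma sum_decomposition_ltk x : x < k -> x \in sb.
Proof.
move=> xk; have /sum_cover[a [b [saa sbb xE]]] : x < N.
  by have := sum_lt sak sb0; lia.
have [a0|/(k_min saa)] := posnP a; last lia.
by rewrite xE a0.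
Qed.

Lemma sum_decomposition_blocks y :
  (y \in sa -> k %| y) /\ (y \in sb) = (y %/ k * k \in sb).
Proof.
elim/ltn_ind: y => y IH.
set q := y %/ k * k; set r := y %% k; have yE : y = q + r := divn_eq y k.
have kq : k %| q := dvdn_mull _ (dvdnn k).
have [r0|r_gt0] := posnP r; first by rewrite yE r0 addn0.
have rk : r < k by rewrite ltn_mod.
have sb_add z s : z \in sb -> k %| z -> s < k -> z + s < y -> z + s \in sb.
  by move=> sbz kz sk zsy; rewrite (IH _ zsy).2 mul_divn_dvdn_add.
have split_q : q < N ->
    exists a b, [/\ a \in sa, b \in sb, 0 < a -> b + r < y, k %| b & q = a + b].
  move=> /sum_cover[a [b [saa sbb qE]]]; exists a, b; split => //; first lia.
  have ka : k %| a by apply: (IH a _).1 => //; lia.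
  have -> : b = q - a by lia.
  exact: dvdn_sub.
have y_notin_sa : y \notin sa.
  apply/negP => say; have [|a [b [saa sbb bry kb qE]]] := split_q.
    by have := sum_lt say sb0; lia.
  have [a0|a_gt0] := posnP a.
    (* k + q = y + (k - r) *)
    have kr : k - r < k by lia.
    have := sum_inj sak say sbb (sum_decomposition_ltk kr); rewrite /r.
    by move=> /(_ ltac:(lia)) ky; move: r_gt0; rewrite /r -ky modnn.
  have := sum_inj saa say (sb_add _ _ sbb kb rk (bry a_gt0)) sb0; lia.
split=> [say|]; first by case/negP: y_notin_sa.
apply/idP/idP => [sby|sbq].
  have [|a [b [saa sbb bry kb qE]]] := split_q; first by have := sum_lt sa0 sby; lia.
  have [a0|a_gt0] := posnP a; first by rewrite qE a0.
  have := sum_inj saa sa0 (sb_add _ _ sbb kb rk (bry a_gt0)) sby; lia.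
have /sum_cover[a [b [saa sbb yab]]] : y < N by have := sum_lt sak sbq; lia.
have [a0|a_gt0] := posnP a; first by rewrite yab a0.
have ay : a < y.
  rewrite ltn_neqAle (_ : a <= y) ?andbT; last by lia.
  by apply: contraNneq y_notin_sa => <-.
have ka : k %| a := (IH a ay).1 saa.
have sbb' : b %/ k * k \in sb by rewrite -(IH b _).2 //; lia.
have qE : q = a + b %/ k * k.
  by rewrite /q yab {1}(divn_eq b k) addnA mul_divn_dvdn_add ?dvdn_add ?dvdn_mull ?ltn_mod.
have := sum_inj saa sa0 sbb' sbq; lia.
Qed.

Lemma sum_decomposition_dvdn_size : uniq sb -> k %| size sb.
Proof.
move=> sb_uniq.
have count_blocks Q : k %| count (mem sb) (iota 0 (Q * k)).
  elim: Q => [|Q IHQ]; first by rewrite mul0n.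
  rewrite mulSnr iotaD count_cat dvdn_add //= add0n.
  rewrite (@eq_in_count _ _ (fun=> Q * k \in sb)); last first.
    move=> z; rewrite mem_iota => /andP[Qz zQ]; change ((z \in sb) = (Q * k \in sb)).
    have -> : z = Q * k + (z - Q * k) by lia.
    by rewrite (sum_decomposition_blocks _).2 mul_divn_dvdn_add ?dvdn_mull //; lia.
  by case: (Q * k \in sb); rewrite ?count_predT ?count_pred0 ?size_iota ?dvdnn ?dvdn0.
suff -> : size sb = count (mem sb) (iota 0 (N * k)) by [].
rewrite -size_filter; apply/perm_size/uniq_perm; rewrite ?filter_uniq ?iota_uniq //.
move=> y; rewrite mem_filter mem_iota andbC; apply/idP/idP => [sby|/andP[//]].
apply/andP; split; last exact: sby.
by have := sum_lt sa0 sby; nia.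
Qed.

End SumDecomposition.

Section PrimeSumDecomposition.

Variables (n : nat) (sa sb : seq nat).
Hypotheses
  (n_prime : prime n) (size_sa : size sa = n) (size_sb : size sb = n)
  (sa_sorted : sorted ltn sa) (sb_sorted : sorted ltn sb)
  (sa0 : nth 0 sa 0 = 0) (sb0 : nth 0 sb 0 = 0) (sb1 : nth 0 sb 1 = 1)
  (sum_inj : forall x x' y y', x \in sa -> x' \in sa -> y \in sb -> y' \in sb ->
     x + y = x' + y' -> x = x')
  (sum_cover : forall z, z < n * n -> exists x y, [/\ x \in sa, y \in sb & z = x + y])
  (sum_lt : forall x y, x \in sa -> y \in sb -> x + y < n * n).

Let n_gt1 : 1 < n := prime_gt1 n_prime.

Let mem_nth_sa i : i < n -> nth 0 sa i \in sa.
Proof. by rewrite -size_sa; apply: mem_nth. Qed.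

Let mem_nth_sb i : i < n -> nth 0 sb i \in sb.
Proof. by rewrite -size_sb; apply: mem_nth. Qed.

Let k := nth 0 sa 1.

Let k_min x : x \in sa -> 0 < x -> k <= x.
Proof.
move=> /(nthP 0)[i]; rewrite size_sa => i_lt_n <-.
case: i i_lt_n => [|[|i]] i_lt_n; rewrite ?sa0 // => _.
by apply/ltnW/(sorted_ltn_nth ltn_trans 0 sa_sorted); rewrite ?inE ?size_sa.
Qed.

Let sa_0 : 0 \in sa.
Proof. by rewrite -sa0 mem_nth_sa ?prime_gt0. Qed.

Let sb_0 : 0 \in sb.
Proof. by rewrite -sb0 mem_nth_sb ?prime_gt0. Qed.

Let sa_k : k \in sa := mem_nth_sa n_gt1.

Let k_gt0 : 0 < k.
Proof.
rewrite -[k]/(nth 0 sa 1); have := @sorted_ltn_nth _ _ ltn_trans 0 _ sa_sorted 0 1.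
by rewrite sa0 !inE size_sa; apply; lia.
Qed.

Let k_eq_n : k = n.
Proof.
have : k %| n.
  rewrite -size_sb.
  apply: (sum_decomposition_dvdn_size sum_inj sum_cover sum_lt sa_0 sb_0 sa_k k_gt0 k_min).
  exact: (sorted_uniq (@ltn_trans) ltnn sb_sorted).
case/primeP: n_prime => _ /[apply] /orP[] /eqP // k1.
have sb_1 := mem_nth_sb n_gt1; rewrite sb1 in sb_1.
by have := sum_inj sa_k sa_0 sb_0 sb_1; rewrite k1 => /(_ erefl).
Qed.

Lemma prime_sum_decompositionE : sa = [seq n * i | i <- iota 0 n] /\ sb = iota 0 n.
Proof.
have sbE : sb = iota 0 n.
  apply/esym/sorted_ltn_eq_subset; rewrite ?iota_ltn_sorted ?size_iota ?size_sb //.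
  move=> y; rewrite mem_iota add0n -k_eq_n => /andP[_].
  exact: (sum_decomposition_ltk sum_cover sum_lt sa_0 sb_0 sa_k k_gt0 k_min).
split=> //; apply: sorted_ltn_eq_subset => //.
- apply: (homo_sorted (e := ltn)) (iota_ltn_sorted 0 n) => i j /=.
  by rewrite ltn_pmul2l ?prime_gt0.
- move=> x sa_x; have /dvdnP[c xE] : n %| x.
    rewrite -k_eq_n.
    exact: (sum_decomposition_blocks sum_inj sum_cover sum_lt sa_0 sb_0 sa_k k_gt0 k_min x).1.
  apply/mapP; exists c; last by rewrite xE mulnC.
  have sb_top : n.-1 \in sb by rewrite sbE mem_iota; lia.
  rewrite mem_iota add0n -(ltn_pmul2r (prime_gt0 n_prime)).
  by have := sum_lt sa_x sb_top; rewrite xE; lia.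
- by rewrite size_map size_iota size_sa.
Qed.

End PrimeSumDecomposition.

Lemma mixed_radix_lt p m r a b c :
  a < p -> b < m -> c < r -> a + p * (b + m * c) < p * (m * r).
Proof.
move=> ap bm cr; apply: (@leq_trans (p * (m * c.+1))); last by rewrite !leq_mul.
nia.
Qed.

Lemma mixed_radix_digits p m r z : 0 < p -> 0 < m -> z < p * (m * r) ->
  exists a b c, [/\ a < p, b < m, c < r & z = a + p * (b + m * c)].
Proof.
move=> p_gt0 m_gt0 z_lt; exists (z %% p), (z %/ p %% m), (z %/ p %/ m).
split; rewrite ?ltn_pmod // ?ltn_divLR ?muln_gt0 ?p_gt0 //; first by lia.
by rewrite {1}(divn_eq z p) {1}(divn_eq (z %/ p) m); lia.
Qed.

(* The entry minus 1 is the number with digits (j mod p, i, j div p) in the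
   mixed radix (p, n, n / p); for p = n this is the square n i + j + 1. *)
Definition mixed_square (p n : nat) : 'M[nat]_n :=
  \matrix_(i, j) (j %% p + p * (i + n * (j %/ p))).+1.

Section MixedSquare.

Variables (p q n : nat).
Hypotheses (p_gt1 : 1 < p) (q_gt0 : 0 < q) (nE : n = q * p).

Let p_gt0 : 0 < p := ltnW p_gt1.
Let n_gt1 : 1 < n. Proof. by rewrite nE; nia. Qed.

Let divn_lt (j : 'I_n) : j %/ p < q.
Proof. by rewrite ltn_divLR // -nE. Qed.

Let rev_ord_digits (j : 'I_n) :
  j %% p + rev_ord j %% p = p.-1 /\ j %/ p + rev_ord j %/ p = q.-1.
Proof.
have vp := ltn_pmod j p_gt0; have uq := divn_lt j.
have revE : val (rev_ord j) = (q.-1 - j %/ p) * p + (p.-1 - j %% p).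
  have qpE : q.-1 * p + p = q * p by rewrite -mulSnr prednK.
  have : j %/ p * p <= q.-1 * p by rewrite leq_mul2r -ltnS prednK // uq orbT.
  by have := divn_eq j p; rewrite /= mulnBl; lia.
have v'p : p.-1 - j %% p < p by lia.
by rewrite revE modnMDl divnMDl // (modn_small v'p) (divn_small v'p); split; lia.
Qed.

Let mixed_square_reversible : reversible_square (mixed_square p n).
Proof.
split; last by move=> i j k l; rewrite !mxE; lia.
split=> [i j k | i j k]; rewrite !mxE.
  have [vj uj] := rev_ord_digits j; have [vk uk] := rev_ord_digits k.
  have := congr1 (muln (p * n)) uj; have := congr1 (muln (p * n)) uk.
  rewrite !mulnDr; lia.
have rev_sum (l : 'I_n) : p * l + p * rev_ord l = p * n.-1.
  by rewrite -mulnDr; congr (_ * _); have := ltn_ord l; rewrite /=; lia.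
by have := rev_sum i; have := rev_sum k; lia.
Qed.

Let mixed_square_range v :
  (exists i j, mixed_square p n i j = v) <-> 1 <= v <= n * n.
Proof.
have nnE : n * n = p * (n * q) by rewrite {2}nE; lia.
split=> [[i [j <-]]|/andP[v_gt0 v_le]].
  rewrite mxE ltnS nnE /=.
  exact: mixed_radix_lt (ltn_pmod j p_gt0) (ltn_ord i) (divn_lt j).
have [|a [b [c [ap bn cq vE]]]] := @mixed_radix_digits p n q v.-1 p_gt0 (ltnW n_gt1).
  by rewrite -nnE; lia.
have j_lt_n : c * p + a < n by rewrite nE; nia.
exists (Ordinal bn), (Ordinal j_lt_n); rewrite mxE /=.
by rewrite modnMDl divnMDl // (modn_small ap) (divn_small ap) addn0 -vE prednK.
Qed.

Let mixed_square_rows (i j k : 'I_n) : j < k -> mixed_square p n i j < mixed_square p n i k.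
Proof.
move=> jk; rewrite !mxE ltnS.
have := divn_eq j p; have := divn_eq k p.
have := leq_div2r p (ltnW jk); rewrite leq_eqVlt => /orP[/eqP uE|u_lt].
  by rewrite uE; lia.
have := mixed_radix_lt (ltn_pmod j p_gt0) (ltn_ord i) (ltnSn (j %/ p)).
have : p * (n * (j %/ p).+1) <= p * (n * (k %/ p)) by rewrite !leq_mul.
lia.
Qed.

Let mixed_square_cols (i j k : 'I_n) : i < j -> mixed_square p n i k < mixed_square p n j k.
Proof. by move=> ij; rewrite !mxE ltnS ltn_add2l ltn_pmul2l // ltn_add2r. Qed.

Lemma mixed_square_principal : principal_reversible_square (mixed_square p n).
Proof.
split=> //; exists (Ordinal (ltnW n_gt1)), (Ordinal n_gt1).
by rewrite !mxE /= (modn_small n_gt1) (modn_small p_gt1) (divn_small p_gt1) mod0n div0n !muln0.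
Qed.

End MixedSquare.

Lemma principal_gt1 n (M : 'M[nat]_n) : principal_reversible_square M -> 1 < n.
Proof.
case=> _ _ _ _ [o [t [o0 t1 Moo Mot]]].
rewrite ltnNge; apply/negP => n_le1.
have ot : o = t by apply: val_inj; rewrite o0 t1 (_ : n = 1) //; have := ltn_ord o; lia.
by move: Mot; rewrite -ot Moo.
Qed.

Section PrincipalSquare.

Variables (n : nat) (M : 'M[nat]_n).
Hypothesis M_principal : principal_reversible_square M.

Let n_gt1 : 1 < n := principal_gt1 M_principal.
Let o : 'I_n := Ordinal (ltnW n_gt1).
Let t : 'I_n := Ordinal n_gt1.

Let M_corner : M o o = 1 /\ M o t = 2.
Proof.
case: M_principal => _ _ _ _ [o' [t' [o'0 t'1 Mo'o' Mo't']]].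
have -> : o = o' by apply: val_inj.
by have -> : t = t' by apply: val_inj; rewrite /= t'1 modn_small.
Qed.

Let M_bounds i j : 1 <= M i j <= n * n.
Proof. by case: M_principal => _ M_range _ _ _; apply/M_range; exists i, j. Qed.

Let M_additive i j : M i j = (M i o - 1) + (M o j - 1) + 1.
Proof.
case: M_principal => [[_ M_vertex] _ _ _ _]; have := M_vertex i j o o.
by have := M_bounds i o; have := M_bounds o j; rewrite M_corner.1; lia.
Qed.

Let M_injective : injective (fun ij : 'I_n * 'I_n => M ij.1 ij.2).
Proof.
apply: (@codom_injective _ _ 1) => v; rewrite card_prod !card_ord mem_iota => v_range.
case: M_principal => _ M_range _ _ _.
have [i [j <-]] : exists i j, M i j = v by apply/M_range; lia.
by apply/codomP; exists (i, j).
Qed.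

Let col := [seq M i o - 1 | i <- enum 'I_n].
Let row := [seq M o j - 1 | j <- enum 'I_n].

Let nth_col (i : 'I_n) : nth 0 col i = M i o - 1.
Proof. by rewrite (nth_map o) ?nth_ord_enum // size_enum_ord. Qed.

Let nth_row (j : 'I_n) : nth 0 row j = M o j - 1.
Proof. by rewrite (nth_map o) ?nth_ord_enum // size_enum_ord. Qed.

Let col_sorted : sorted ltn col.
Proof.
apply: (homo_sorted (e := fun i j : 'I_n => i < j)) (sorted_enum_ord n) => i j /= ij.
case: M_principal => _ _ _ M_cols _.
by have := M_cols i j o ij; have := M_bounds i o; lia.
Qed.

Let row_sorted : sorted ltn row.
Proof.
apply: (homo_sorted (e := fun i j : 'I_n => i < j)) (sorted_enum_ord n) => i j /= ij.
case: M_principal => _ _ M_rows _ _.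
by have := M_rows o i j ij; have := M_bounds o i; lia.
Qed.

Let col_row_inj x x' y y' : x \in col -> x' \in col -> y \in row -> y' \in row ->
  x + y = x' + y' -> x = x'.
Proof.
move=> /mapP[i _ ->] /mapP[i' _ ->] /mapP[j _ ->] /mapP[j' _ ->] e.
have [-> _] : (i, j) = (i', j').
  by apply: M_injective; rewrite /= [M i j]M_additive [M i' j']M_additive e.
by [].
Qed.

Let col_row_cover z : z < n * n ->
  exists x y, [/\ x \in col, y \in row & z = x + y].
Proof.
move=> z_lt; case: M_principal => _ M_range _ _ _.
have [i [j Mij]] : exists i j, M i j = z.+1 by apply/M_range; lia.
exists (M i o - 1), (M o j - 1); split; try by apply: map_f; rewrite mem_enum.
by move: Mij; rewrite M_additive; lia.
Qed.

Let col_row_lt x y : x \in col -> y \in row -> x + y < n * n.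
Proof.
move=> /mapP[i _ ->] /mapP[j _ ->].
by have := M_bounds i j; rewrite M_additive; lia.
Qed.

Lemma principal_prime_eq : prime n -> M = mixed_square n n.
Proof.
move=> n_prime.
have size_col : size col = n by rewrite size_map size_enum_ord.
have size_row : size row = n by rewrite size_map size_enum_ord.
have col0 : nth 0 col 0 = 0 by rewrite (nth_col o : nth 0 col 0 = _) M_corner.1.
have row0 : nth 0 row 0 = 0 by rewrite (nth_row o : nth 0 row 0 = _) M_corner.1.
have row1 : nth 0 row 1 = 1 by rewrite (nth_row t : nth 0 row 1 = _) M_corner.2.
have [colE rowE] := prime_sum_decompositionE n_prime size_col size_row col_sorted
  row_sorted col0 row0 row1 col_row_inj col_row_cover col_row_lt.
apply/matrixP => i j; rewrite mxE M_additive -nth_col -nth_row colE rowE.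
rewrite (nth_map 0) ?size_iota // !nth_iota // modn_small // divn_small //.
lia.
Qed.

End PrincipalSquare.

Lemma map_inord_valK n m (A : 'M['I_m.+1]_n) :
  map_mx inord (map_mx (fun x : 'I_m.+1 => nat_of_ord x) A) = A.
Proof. by apply/matrixP => i j; rewrite !mxE inord_val. Qed.

Lemma principal_map_inordK n (M : 'M[nat]_n) : principal_reversible_square M ->
  map_mx (fun x : 'I_(n * n).+1 => nat_of_ord x) (map_mx inord M) = M.
Proof.
case=> _ M_range _ _ _; apply/matrixP => i j; rewrite !mxE inordK // ltnS.
by have /andP[] : 1 <= M i j <= n * n by apply/M_range; exists i, j.
Qed.

Lemma N_count_eq1 n : N_count n = 1 <->
  exists2 S : 'M[nat]_n, principal_reversible_square S &
    forall M, principal_reversible_square M -> M = S.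
Proof.
split=> [/mem_card1[A0 A0E] | [S S_principal S_unique]].
  have /asboolP A0_principal := etrans (A0E A0) (eqxx A0).
  exists (map_mx (fun x : 'I_(n * n).+1 => nat_of_ord x) A0) => // M M_principal.
  have /eqP <- : map_mx inord M == A0.
    have := A0E (map_mx inord M); rewrite !inE => <-.
    by apply/asboolP; rewrite principal_map_inordK.
  by rewrite principal_map_inordK.
apply: (@eq_card1 _ (map_mx inord S)) => A; rewrite !inE.
apply/asboolP/eqP => [/S_unique <- | ->]; first by rewrite map_inord_valK.
by rewrite principal_map_inordK.
Qed.

Theorem corollary3 (n : nat) : N_count n = 1 <-> prime n.
Proof.
rewrite N_count_eq1; split=> [[S S_principal S_unique] | n_prime].
  have n_gt1 := principal_gt1 S_principal.
  apply/negPn/negP => /primePn[|[d /andP[d_gt1 d_lt_n] /dvdnP[q nE]]]; first by lia.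
  have q_gt0 : 0 < q by lia.
  have := S_unique _ (mixed_square_principal d_gt1 q_gt0 nE).
  rewrite -(S_unique _ (mixed_square_principal n_gt1 (isT : 0 < 1) (esym (mul1n n)))).
  move/matrixP/(_ (Ordinal (ltnW n_gt1)) (Ordinal d_lt_n)); rewrite !mxE /=.
  rewrite modnn divnn (ltnW d_gt1) (modn_small d_lt_n) (divn_small d_lt_n).
  nia.
exists (mixed_square n n); last by move=> M /principal_prime_eq; apply.
exact: mixed_square_principal (prime_gt1 n_prime) (isT : 0 < 1) (esym (mul1n n)).
Qed.
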